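(* Let $\Gamma$ be a subgroup of $\mathbb{R}$ commensurable with $\mathbb{Z}$ (i.e. an arithmetic lattice for $G(\mathbb{Z})=\mathbb{Z}$, $G(\mathbb{R})=\mathbb{R}$). Then $\log(\mathbf{C}_n(\Gamma,\mathbb{R})) \simeq \log(n)$. More precisely, $$ n (\log n)^{\log 2} \preceq \mathbf{C}_n(\Gamma,\mathbb{R}) \preceq n \log n. $$
   Context: For subgroups $\Delta_1,\Delta_2$ of a group, $c(\Delta_1,\Delta_2) = [\Delta_1:\Delta_1\cap\Delta_2][\Delta_2:\Delta_1\cap\Delta_2]$. $\mathbf{C}_n(\Gamma,\mathbb{R})$ is the number of subgroups $\Delta \leq \mathbb{R}$ with $c(\Gamma,\Delta) \leq n$. For functions $f,g$ on $\mathbb{N}$, $f \preceq g$ means there exists $C>0$ with $f(n) \leq C g(Cn)$ for all $n$; $f \simeq g$ means $f\preceq g$ and $g \preceq f$. $\log$ denotes the natural logarithm. *)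

From Stdlib Require Import Reals Lra Lia ZArith.
Open Scope R_scope.

Definition rset := R -> Prop.

Definition is_subgroup (A : rset) : Prop :=
  A 0 /\ (forall x y, A x -> A y -> A (x - y)).

Definition setI (A B : rset) : rset := fun x => A x /\ B x.

Definition Zset : rset := fun x => exists z : Z, x = IZR z.

(* index_eq A B k : B <= A has exactly k cosets in A, i.e. [A : B] = k.
   f enumerates a complete, irredundant system of coset representatives. *)
Definition index_eq (A B : rset) (k : nat) : Prop :=
  exists f : nat -> R,
    (forall i, (i < k)%nat -> A (f i)) /\
    (forall i j, (i < k)%nat -> (j < k)%nat -> B (f i - f j) -> i = j) /\
    (forall a, A a -> exists i, (i < k)%nat /\ B (a - f i)).

(* c(D1,D2) <= n, where c(D1,D2) = [D1 : D1 cap D2][D2 : D1 cap D2]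
   (infinite when one index is infinite). *)
Definition c_le (D1 D2 : rset) (n : nat) : Prop :=
  exists i j : nat,
    index_eq D1 (setI D1 D2) i /\ index_eq D2 (setI D1 D2) j /\ (i * j <= n)%nat.

Definition commensurable (D1 D2 : rset) : Prop := exists n, c_le D1 D2 n.

(* The family of subsets satisfying P has exactly m members
   (subsets identified up to extensional equality). *)
Definition card_sets_eq (P : rset -> Prop) (m : nat) : Prop :=
  exists f : nat -> rset,
    (forall i, (i < m)%nat -> P (f i)) /\
    (forall i j, (i < m)%nat -> (j < m)%nat ->
        (forall x, f i x <-> f j x) -> i = j) /\
    (forall D, P D -> exists i, (i < m)%nat /\ forall x, f i x <-> D x).

Definition Cn_eq (G : rset) (n m : nat) : Prop :=
  card_sets_eq (fun D => is_subgroup D /\ c_le G D n) m.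

Definition preceq (f g : nat -> R) : Prop :=
  exists C : nat, (0 < C)%nat /\ forall n, f n <= INR C * g (C * n)%nat.

Definition simeq (f g : nat -> R) : Prop := preceq f g /\ preceq g f.

(* real power x^y for x >= 0, with 0^y = 0. *)
Definition rpow (x y : R) : R := if Rlt_dec 0 x then Rpower x y else 0.

(* A subgroup commensurable with [Z] is [qZ] for some [q > 0], and the subgroups [D] with
   [c(qZ, D) <= n] are exactly the [(q a / b)Z] with [a, b] coprime and [a b <= n]; indeed
   [qZ :&: (q a / b)Z = (q a)Z] has index [a] in [qZ] and [b] in [(q a / b)Z].  So [C_n] counts
   coprime pairs with [a b <= n].  All pairs with [a b <= n] number [sum_(a <= n) n / a], which
   lies between [n ln n - n] and [n (1 + ln n)]; grouping the non-coprime ones by their gcd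
   [d >= 2] removes at most [sum_(d >= 2) (n / d^2) (1 + ln n) <= 3/4 n (1 + ln n)] of them.
   Hence [n ln n / 4 - 7 n / 4 <= C_n <= n (1 + ln n)], which gives both growth bounds since
   [(ln n)^(ln 2) <= 1 + ln n]. *)

From Stdlib Require Import Reals Lra Lia ZArith List Classical ClassicalEpsilon.
Open Scope R_scope.

(** * Subgroups of R and their indices *)

Definition multiples (p : R) : rset := fun x => exists z : Z, x = p * IZR z.

Definition coprime (a b : nat) : Prop := Z.gcd (Z.of_nat a) (Z.of_nat b) = 1%Z.

Lemma subgroup_opp A x : is_subgroup A -> A x -> A (- x).
Proof. intros [A0 Asub] Ax. replace (- x) with (0 - x) by ring. auto. Qed.

Lemma subgroup_add A x y : is_subgroup A -> A x -> A y -> A (x + y).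
Proof.
  intros HA Ax Ay. replace (x + y) with (x - - y) by ring.
  apply HA; auto. apply subgroup_opp; auto.
Qed.

Lemma subgroup_mul_IZR A z x : is_subgroup A -> A x -> A (IZR z * x).
Proof.
  intros HA Ax. induction z using Z.peano_ind.
  - rewrite Rmult_0_l. apply HA.
  - rewrite succ_IZR, Rmult_plus_distr_r, Rmult_1_l. apply subgroup_add; auto.
  - rewrite <- Z.sub_1_r, minus_IZR.
    replace ((IZR z - 1) * x) with (IZR z * x - x) by ring. apply HA; auto.
Qed.

Lemma subgroup_mul_INR A n x : is_subgroup A -> A x -> A (INR n * x).
Proof. rewrite INR_IZR_INZ. apply subgroup_mul_IZR. Qed.

Lemma subgroup_multiples p : is_subgroup (multiples p).
Proof.
  split.
  - exists 0%Z. ring.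
  - intros x y [m ->] [k ->]. exists (m - k)%Z. rewrite minus_IZR. ring.
Qed.

Lemma multiples_mul_INR p n : multiples p (p * INR n).
Proof. exists (Z.of_nat n). now rewrite INR_IZR_INZ. Qed.

Lemma subgroup_setI A B : is_subgroup A -> is_subgroup B -> is_subgroup (setI A B).
Proof.
  intros [A0 Asub] [B0 Bsub]. split.
  - split; auto.
  - intros x y [] []. split; auto.
Qed.

Lemma index_eq_ext A B A' B' k : (forall x, A x <-> A' x) -> (forall x, B x <-> B' x) ->
  index_eq A B k -> index_eq A' B' k.
Proof.
  intros EA EB [f [Af [Binj Bcov]]]. exists f. split; [|split].
  - intros i Hi. now apply EA, Af.
  - intros i j Hi Hj HB. apply Binj; auto. now apply EB.
  - intros a Ha. destruct (Bcov a) as [i [Hi HB]]; [now apply EA|].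
    exists i. split; auto. now apply EB.
Qed.

Lemma c_le_ext A B A' B' n : (forall x, A x <-> A' x) -> (forall x, B x <-> B' x) ->
  c_le A B n -> c_le A' B' n.
Proof.
  intros EA EB [i [j [Hi [Hj Hij]]]].
  assert (EI : forall x, setI A B x <-> setI A' B' x) by (intro x; unfold setI; rewrite EA, EB; tauto).
  exists i, j. split; [|split]; auto; eapply index_eq_ext; eauto.
Qed.

Lemma c_le_sym A B n : c_le A B n -> c_le B A n.
Proof.
  intros [i [j [Hi [Hj Hij]]]].
  assert (EI : forall x, setI A B x <-> setI B A x) by (intro x; unfold setI; tauto).
  exists j, i. split; [|split]; try (eapply index_eq_ext; eauto; tauto). lia.
Qed.

Lemma pigeonhole_le m k (h : nat -> nat) : (forall t, (t < m)%nat -> (h t < k)%nat) ->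
  (forall s t, (s < m)%nat -> (t < m)%nat -> h s = h t -> s = t) -> (m <= k)%nat.
Proof.
  intros Hk Hinj.
  rewrite <- (length_seq m 0), <- (length_map h), <- (length_seq k 0).
  apply NoDup_incl_length.
  - apply NoDup_map_NoDup_ForallPairs; [|apply seq_NoDup].
    intros s t Hs Ht. apply in_seq in Hs, Ht. apply Hinj; lia.
  - intros y Hy. apply in_map_iff in Hy as [t [<- Ht]]. apply in_seq in Ht.
    apply in_seq. specialize (Hk t). lia.
Qed.

Lemma index_eq_ge A B k m (x : nat -> R) : is_subgroup B -> index_eq A B k ->
  (forall t, (t < m)%nat -> A (x t)) ->
  (forall s t, (s < m)%nat -> (t < m)%nat -> B (x s - x t) -> s = t) -> (m <= k)%nat.
Proof.
  intros HB [f [_ [_ Bcov]]] Ax Hinj.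
  assert (Hrep : forall t, exists i, (t < m)%nat -> (i < k)%nat /\ B (x t - f i)).
  { intro t. destruct (lt_dec t m) as [lt|nlt].
    - destruct (Bcov (x t) (Ax t lt)) as [i Hi]. now exists i.
    - exists 0%nat. lia. }
  destruct (choice _ Hrep) as [h Hh].
  apply (pigeonhole_le m k h).
  - intros t Ht. apply Hh, Ht.
  - intros s t Hs Ht Est. apply Hinj; auto.
    destruct (Hh s Hs) as [_ Bs]. destruct (Hh t Ht) as [_ Bt]. rewrite Est in Bs.
    replace (x s - x t) with ((x s - f (h t)) - (x t - f (h t))) by ring. now apply HB.
Qed.

Lemma index_eq_unique A B k k' : is_subgroup B -> index_eq A B k -> index_eq A B k' -> k = k'.
Proof.
  intros HB Hk Hk'.
  assert (Hle : forall l l', index_eq A B l -> index_eq A B l' -> (l' <= l)%nat).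
  { intros l l' Hl [f [Af [Binj _]]]. exact (index_eq_ge A B l l' f HB Hl Af Binj). }
  pose proof (Hle _ _ Hk Hk'). pose proof (Hle _ _ Hk' Hk). lia.
Qed.

Lemma index_eq_mul_mem A B k x : is_subgroup A -> is_subgroup B -> index_eq A B k -> A x ->
  exists m, (1 <= m <= k)%nat /\ B (INR m * x).
Proof.
  intros HA HB Hk Ax. apply NNPP. intro Hnone.
  assert (S k <= k)%nat; [|lia].
  apply (index_eq_ge A B k (S k) (fun t => INR t * x) HB Hk).
  - intros t _. now apply subgroup_mul_INR.
  - intros s t Hs Ht Bst. apply NNPP. intro Hst. apply Hnone.
    destruct (lt_eq_lt_dec s t) as [[lt|eq]|gt]; [|contradiction|].
    + exists (t - s)%nat. split; [lia|]. rewrite minus_INR by lia.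
      replace ((INR t - INR s) * x) with (- (INR s * x - INR t * x)) by ring.
      now apply subgroup_opp.
    + exists (s - t)%nat. split; [lia|]. rewrite minus_INR by lia.
      now replace ((INR s - INR t) * x) with (INR s * x - INR t * x) by ring.
Qed.

(* [u] is the least [n >= 1] with [p n] in [A]; the remainder of any element modulo [p u] is then 0. *)
Lemma subgroup_of_multiples p A m : 0 < p -> is_subgroup A ->
  (forall x, A x -> multiples p x) -> (1 <= m)%nat -> A (p * INR m) ->
  exists u, (1 <= u)%nat /\ forall x, A x <-> multiples (p * INR u) x.
Proof.
  intros Hp HA Asub Hm Am.
  set (P := fun n => (1 <= n)%nat /\ A (p * INR n)).
  destruct (dec_inh_nat_subset_has_unique_least_element P (fun n => classic (P n))
              (ex_intro _ m (conj Hm Am))) as [u [[[Hu Au] Hmin] _]].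
  exists u. split; auto. intro x. split.
  - intro Ax. destruct (Asub x Ax) as [z ->].
    set (U := Z.of_nat u).
    assert (EU : INR u = IZR U) by apply INR_IZR_INZ.
    pose proof (Z.div_mod z U ltac:(lia)) as Hdm.
    pose proof (Z.mod_pos_bound z U ltac:(lia)) as Hbound.
    assert (Ar : A (p * IZR (z mod U))).
    { replace (p * IZR (z mod U)) with (p * IZR z - IZR (z / U) * (p * INR u)).
      - apply HA; auto. now apply subgroup_mul_IZR.
      - rewrite Hdm at 1. rewrite plus_IZR, mult_IZR, EU. ring. }
    destruct (Z.eq_dec (z mod U) 0) as [r0|rn0].
    + exists (z / U)%Z. rewrite Hdm at 1. rewrite r0, plus_IZR, mult_IZR, EU. ring.
    + assert (Pr : P (Z.to_nat (z mod U))).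
      { split; [lia|]. now rewrite INR_IZR_INZ, Z2Nat.id by lia. }
      specialize (Hmin _ Pr). lia.
  - intros [z ->]. rewrite Rmult_comm. now apply subgroup_mul_IZR.
Qed.

Lemma divide_fact m j : (1 <= m <= j)%nat -> Nat.divide m (fact j).
Proof.
  induction j as [|j IH]; intro Hm; [lia|].
  destruct (Nat.eq_dec m (S j)) as [->|ne].
  - exists (fact j). simpl. lia.
  - destruct IH as [c Hc]; [lia|]. exists (S j * c)%nat. simpl. rewrite Hc. lia.
Qed.

Lemma fraction_lowest_terms u N : (1 <= u)%nat -> (1 <= N)%nat ->
  exists a b, (1 <= a)%nat /\ (1 <= b)%nat /\ coprime a b /\ INR u / INR N = INR a / INR b.
Proof.
  intros Hu HN. set (U := Z.of_nat u). set (M := Z.of_nat N). set (g := Z.gcd U M).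
  assert (gpos : (0 < g)%Z).
  { pose proof (Z.gcd_nonneg U M). assert (g <> 0%Z); [|lia].
    intro E. apply Z.gcd_eq_0 in E. unfold U in E. lia. }
  destruct (Z.gcd_divide_l U M) as [a Ha]. destruct (Z.gcd_divide_r U M) as [b Hb]. fold g in Ha, Hb.
  assert (apos : (0 < a)%Z) by (unfold U in Ha; nia).
  assert (bpos : (0 < b)%Z) by (unfold M in Hb; nia).
  exists (Z.to_nat a), (Z.to_nat b). split; [lia|]. split; [lia|]. split.
  - unfold coprime. rewrite !Z2Nat.id by lia.
    assert (Hg : Z.gcd (U / g) (M / g) = 1%Z) by (apply Z.gcd_div_gcd; lia).
    rewrite Ha, Hb, !Z.div_mul in Hg by lia. exact Hg.
  - rewrite !INR_IZR_INZ, !Z2Nat.id by lia. fold U M. rewrite Ha, Hb, !mult_IZR.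
    assert (0 < IZR g) by (apply IZR_lt; lia). assert (0 < IZR b) by (apply IZR_lt; lia).
    field. lra.
Qed.

(* [D] lies between [(q m)Z] and [(q / j!)Z], where [m], [j] come from the two indices. *)
Lemma c_le_multiples_form q D n : 0 < q -> is_subgroup D -> c_le (multiples q) D n ->
  exists a b, (1 <= a)%nat /\ (1 <= b)%nat /\ coprime a b /\
    forall x, D x <-> multiples (q * INR a / INR b) x.
Proof.
  intros Hq HD [i [j [Hi [Hj _]]]].
  pose proof (subgroup_multiples q) as Hmq.
  pose proof (subgroup_setI _ _ Hmq HD) as HI.
  assert (HN : 0 < INR (fact j)) by (apply lt_0_INR, lt_O_fact).
  destruct (index_eq_mul_mem _ _ i q Hmq HI Hi) as [m [Hm [_ Dm]]].
  { exists 1%Z. ring. }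
  destruct (subgroup_of_multiples (q / INR (fact j)) D (m * fact j)) as [u [Hu Du]]; auto.
  - apply Rdiv_lt_0_compat; auto.
  - intros d Dd. destruct (index_eq_mul_mem _ _ j d HD HI Hj Dd) as [k [Hk [[z Hz] _]]].
    destruct (divide_fact k j Hk) as [c Hc].
    exists (z * Z.of_nat c)%Z. rewrite mult_IZR, <- INR_IZR_INZ.
    assert (Hkpos : 0 < INR k) by (apply lt_0_INR; lia).
    assert (Hcpos : 0 < INR c) by (apply lt_0_INR; pose proof (lt_O_fact j); destruct c; lia).
    apply (Rmult_eq_reg_l (INR k)); [|lra]. rewrite Hz, Hc, mult_INR. field. lra.
  - pose proof (lt_O_fact j). lia.
  - rewrite mult_INR.
    replace (q / INR (fact j) * (INR m * INR (fact j))) with (INR m * q) by (field; lra).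
    exact Dm.
  - destruct (fraction_lowest_terms u (fact j) Hu ltac:(pose proof (lt_O_fact j); lia))
      as [a [b [Ha [Hb [Hab Eab]]]]].
    exists a, b. split; [|split; [|split]]; auto.
    replace (q * INR a / INR b) with (q / INR (fact j) * INR u); [exact Du|].
    replace (q * INR a / INR b) with (q * (INR a / INR b)) by (unfold Rdiv; ring).
    rewrite <- Eab. unfold Rdiv. ring.
Qed.

Lemma multiples_setI_coprime q a b : 0 < q -> (1 <= b)%nat -> coprime a b ->
  forall x, setI (multiples q) (multiples (q * INR a / INR b)) x <-> multiples (q * INR a) x.
Proof.
  intros Hq Hb Hab x. assert (0 < INR b) by (apply lt_0_INR; lia).
  rewrite !INR_IZR_INZ in *. split.
  - intros [[m Hm] [k Hk]].
    assert (E : (Z.of_nat b * m = Z.of_nat a * k)%Z).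
    { apply eq_IZR. rewrite !mult_IZR.
      assert (Hmk : q * IZR m = q * IZR (Z.of_nat a) / IZR (Z.of_nat b) * IZR k)
        by (rewrite <- Hm; exact Hk).
      apply (Rmult_eq_reg_l (q / IZR (Z.of_nat b))); [|apply Rgt_not_eq, Rdiv_lt_0_compat; lra].
      replace (q / IZR (Z.of_nat b) * (IZR (Z.of_nat b) * IZR m)) with (q * IZR m) by (field; lra).
      rewrite Hmk. field. lra. }
    assert (Hdiv : (Z.of_nat a | m)%Z) by (apply (Z.gauss _ (Z.of_nat b)); [exists k; lia | exact Hab]).
    destruct Hdiv as [t ->]. exists t. rewrite Hm, mult_IZR. ring.
  - intros [z ->]. split.
    + exists (Z.of_nat a * z)%Z. rewrite mult_IZR. ring.
    + exists (Z.of_nat b * z)%Z. rewrite mult_IZR. field. lra.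
Qed.

Lemma index_multiples p k : 0 < p -> (1 <= k)%nat -> index_eq (multiples p) (multiples (p * INR k)) k.
Proof.
  intros Hp Hk. rewrite INR_IZR_INZ. set (K := Z.of_nat k).
  exists (fun i => p * INR i). split; [|split].
  - intros i _. apply multiples_mul_INR.
  - intros i j Hi Hj [z Hz].
    assert (E : (Z.of_nat i - Z.of_nat j = K * z)%Z).
    { apply eq_IZR. apply (Rmult_eq_reg_l p); [|lra].
      rewrite minus_IZR, mult_IZR, <- !INR_IZR_INZ. rewrite <- Rmult_assoc, <- Hz. ring. }
    assert (z = 0%Z) by (unfold K in E; nia). subst z. lia.
  - intros a [z ->].
    pose proof (Z.div_mod z K ltac:(unfold K; lia)) as Hdm.
    pose proof (Z.mod_pos_bound z K ltac:(unfold K; lia)) as Hbound.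
    exists (Z.to_nat (z mod K)). split; [unfold K in *; lia|].
    exists (z / K)%Z. rewrite INR_IZR_INZ, Z2Nat.id by lia.
    rewrite Hdm at 1. rewrite plus_IZR, mult_IZR. ring.
Qed.

Lemma multiples_inj p p' : 0 < p -> 0 < p' ->
  (forall x, multiples p x <-> multiples p' x) -> p = p'.
Proof.
  intros Hp Hp' E.
  destruct (proj1 (E p) (ex_intro _ 1%Z (eq_sym (Rmult_1_r p)))) as [z Hz].
  destruct (proj2 (E p') (ex_intro _ 1%Z (eq_sym (Rmult_1_r p')))) as [w Hw].
  assert (Hzw : (z * w = 1)%Z).
  { apply eq_IZR. rewrite mult_IZR. apply (Rmult_eq_reg_l p); [|lra].
    transitivity (p * IZR w * IZR z); [ring|]. rewrite <- Hw, <- Hz. simpl. ring. }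
  destruct (Z.eq_mul_1 z w Hzw) as [-> | ->]; rewrite Hz; simpl; [ring|].
  exfalso. rewrite Hz in Hp. simpl in Hp. lra.
Qed.

Lemma coprime_fraction_inj a b a' b' : (1 <= a)%nat -> (1 <= b)%nat -> (1 <= a')%nat -> (1 <= b')%nat ->
  coprime a b -> coprime a' b' -> INR a / INR b = INR a' / INR b' -> a = a' /\ b = b'.
Proof.
  intros Ha Hb Ha' Hb' Hab Hab' E.
  assert (0 < INR b) by (apply lt_0_INR; lia). assert (0 < INR b') by (apply lt_0_INR; lia).
  assert (Ecross : (a * b' = a' * b)%nat).
  { apply INR_eq. rewrite !mult_INR.
    apply (Rmult_eq_reg_r (/ INR b * / INR b')).
    - replace (INR a * INR b' * (/ INR b * / INR b')) with (INR a / INR b) by (field; lra).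
      rewrite E. field. lra.
    - apply Rmult_integral_contrapositive; split; apply Rinv_neq_0_compat; lra. }
  assert (Ea : Z.of_nat a = Z.of_nat a').
  { apply Z.divide_antisym_nonneg; try lia.
    - apply (Z.gauss _ (Z.of_nat b)); [exists (Z.of_nat b'); lia | exact Hab].
    - apply (Z.gauss _ (Z.of_nat b')); [exists (Z.of_nat b); lia | exact Hab']. }
  assert (a = a') by lia. subst a'. split; [reflexivity | nia].
Qed.

Lemma c_le_multiples_iff q a b n : 0 < q -> (1 <= a)%nat -> (1 <= b)%nat -> coprime a b ->
  c_le (multiples q) (multiples (q * INR a / INR b)) n <-> (a * b <= n)%nat.
Proof.
  intros Hq Ha Hb Hab.
  assert (0 < INR a) by (apply lt_0_INR; lia). assert (0 < INR b) by (apply lt_0_INR; lia).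
  set (p := q * INR a / INR b).
  assert (Hp : 0 < p) by (unfold p; apply Rdiv_lt_0_compat; nra).
  pose proof (multiples_setI_coprime q a b Hq Hb Hab) as EI. fold p in EI.
  assert (HI : is_subgroup (setI (multiples q) (multiples p)))
    by (apply subgroup_setI; apply subgroup_multiples).
  assert (Ia : index_eq (multiples q) (setI (multiples q) (multiples p)) a).
  { apply (index_eq_ext (multiples q) (multiples (q * INR a))); try tauto.
    - intro x. now rewrite EI.
    - now apply index_multiples. }
  assert (Ib : index_eq (multiples p) (setI (multiples q) (multiples p)) b).
  { apply (index_eq_ext (multiples p) (multiples (p * INR b))); try tauto.
    - intro x. rewrite EI. replace (p * INR b) with (q * INR a) by (unfold p; field; lra). tauto.
    - now apply index_multiples. }
  split.
  - intros [i [j [Hi [Hj Hij]]]].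
    rewrite (index_eq_unique _ _ _ _ HI Ia Hi), (index_eq_unique _ _ _ _ HI Ib Hj). exact Hij.
  - intro Hn. exists a, b. auto.
Qed.

(** * Counting coprime pairs *)

Lemma card_sets_eq_of_list {X : Type} (P : rset -> Prop) (F : X -> rset) (l : list X) (d : X) :
  NoDup l -> (forall u, In u l -> P (F u)) ->
  (forall u v, In u l -> In v l -> (forall x, F u x <-> F v x) -> u = v) ->
  (forall D, P D -> exists u, In u l /\ forall x, F u x <-> D x) ->
  card_sets_eq P (length l).
Proof.
  intros Hl HP Hinj Hsurj. exists (fun i => F (nth i l d)). split; [|split].
  - intros i Hi. apply HP, nth_In, Hi.
  - intros i j Hi Hj E. apply (proj1 (NoDup_nth l d) Hl); auto.
    apply Hinj; auto; apply nth_In; auto.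
  - intros D HD. destruct (Hsurj D HD) as [u [Hu Eu]].
    destruct (In_nth l u d Hu) as [i [Hi <-]]. now exists i.
Qed.

Open Scope nat_scope.

Definition divisor_pairs (n : nat) : list (nat * nat) :=
  flat_map (fun a => map (fun b => (a, b)) (seq 1 (n / a))) (seq 1 n).

Definition coprime_pairs (n : nat) : list (nat * nat) :=
  filter (fun ab => Z.eqb (Z.gcd (Z.of_nat (fst ab)) (Z.of_nat (snd ab))) 1) (divisor_pairs n).

Definition coprime_count (n : nat) : nat := length (coprime_pairs n).

Lemma in_divisor_pairs n a b : In (a, b) (divisor_pairs n) <-> 1 <= a /\ 1 <= b /\ a * b <= n.
Proof.
  unfold divisor_pairs. rewrite in_flat_map.
  assert (Hdiv : 1 <= a -> (b <= n / a <-> a * b <= n)).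
  { intro Ha. split; intro H.
    - pose proof (Nat.Div0.mul_div_le n a). nia.
    - apply Nat.div_le_lower_bound; lia. }
  split.
  - intros [a' [Ha' Hb]]. apply in_seq in Ha'. apply in_map_iff in Hb as [b' [E Hb]].
    inversion E; subst. apply in_seq in Hb. rewrite <- Hdiv by lia. lia.
  - intros [Ha [Hb Hab]]. exists a. split; [apply in_seq; nia|].
    apply in_map_iff. exists b. split; auto. apply in_seq. rewrite <- Hdiv in Hab by lia. lia.
Qed.

Lemma in_coprime_pairs n a b :
  In (a, b) (coprime_pairs n) <-> (1 <= a /\ 1 <= b /\ a * b <= n) /\ coprime a b.
Proof. unfold coprime_pairs. rewrite filter_In, in_divisor_pairs, Z.eqb_eq. reflexivity. Qed.

Lemma NoDup_flat_map {A B : Type} (g : A -> list B) (l : list A) : NoDup l ->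
  (forall a, NoDup (g a)) -> (forall a a' y, In y (g a) -> In y (g a') -> a = a') ->
  NoDup (flat_map g l).
Proof.
  intros Hl Hg Hdisj. induction Hl as [|a l Ha Hl IH]; simpl; [constructor|].
  apply NoDup_app; auto.
  intros y Hy Hy'. apply in_flat_map in Hy' as [a' [Ha' Hy']].
  now rewrite (Hdisj a a' y Hy Hy') in Ha.
Qed.

Lemma NoDup_divisor_pairs n : NoDup (divisor_pairs n).
Proof.
  apply NoDup_flat_map; [apply seq_NoDup| |].
  - intro a. apply NoDup_map_NoDup_ForallPairs; [|apply seq_NoDup].
    intros b b' _ _ E. now inversion E.
  - intros a a' y Hy Hy'. apply in_map_iff in Hy as [b [<- _]].
    apply in_map_iff in Hy' as [b' [E _]]. now inversion E.
Qed.

Lemma NoDup_coprime_pairs n : NoDup (coprime_pairs n).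
Proof. apply NoDup_filter, NoDup_divisor_pairs. Qed.

Lemma length_divisor_pairs n : length (divisor_pairs n) = list_sum (map (fun a => n / a) (seq 1 n)).
Proof.
  unfold divisor_pairs. rewrite length_flat_map. f_equal. apply map_ext. intro a.
  now rewrite length_map, length_seq.
Qed.

Lemma coprime_count_le n : coprime_count n <= length (divisor_pairs n).
Proof. apply filter_length_le. Qed.

Lemma coprime_count_ge n : n <= coprime_count n.
Proof.
  unfold coprime_count.
  transitivity (length (map (fun a => (a, 1)) (seq 1 n))); [now rewrite length_map, length_seq|].
  apply NoDup_incl_length.
  - apply NoDup_map_NoDup_ForallPairs; [|apply seq_NoDup]. intros a a' _ _ E. now inversion E.
  - intros ab Hab. apply in_map_iff in Hab as [a [<- Ha]]. apply in_seq in Ha.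
    apply in_coprime_pairs. split; [lia|]. apply Z.gcd_1_r.
Qed.

(* Sieve by the gcd: a non-coprime pair is [(d a', d b')] with [d >= 2] and [a' b' <= n / d^2]. *)
Lemma divisor_pairs_le_coprime_count_add n : length (divisor_pairs n) <=
  coprime_count n + list_sum (map (fun d => length (divisor_pairs (n / (d * d)))) (seq 2 (n - 1))).
Proof.
  set (scaled := flat_map (fun d => map (fun ab => (d * fst ab, d * snd ab))
                                         (divisor_pairs (n / (d * d)))) (seq 2 (n - 1))).
  replace (coprime_count n + _) with (length (coprime_pairs n ++ scaled)).
  2: { unfold scaled, coprime_count. rewrite length_app, length_flat_map. do 2 f_equal.
       apply map_ext. intro. apply length_map. }
  apply NoDup_incl_length; [apply NoDup_divisor_pairs|].
  intros [a b] Hab. apply in_or_app.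
  destruct (Z.eq_dec (Z.gcd (Z.of_nat a) (Z.of_nat b)) 1) as [Hcop|Hncop].
  { left. apply in_coprime_pairs. split; [now apply in_divisor_pairs | exact Hcop]. }
  right. apply in_divisor_pairs in Hab as [Ha [Hb Hn]].
  set (g := Z.gcd (Z.of_nat a) (Z.of_nat b)) in *.
  assert (gpos : (0 < g)%Z).
  { pose proof (Z.gcd_nonneg (Z.of_nat a) (Z.of_nat b)). assert (g <> 0%Z); [|lia].
    intro E. apply Z.gcd_eq_0 in E. lia. }
  destruct (Z.gcd_divide_l (Z.of_nat a) (Z.of_nat b)) as [a' Ha'].
  destruct (Z.gcd_divide_r (Z.of_nat a) (Z.of_nat b)) as [b' Hb']. fold g in Ha', Hb'.
  assert ((0 < a')%Z) by nia. assert ((0 < b')%Z) by nia.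
  set (d := Z.to_nat g).
  assert (Ea : a = d * Z.to_nat a') by (unfold d; lia).
  assert (Eb : b = d * Z.to_nat b') by (unfold d; lia).
  apply in_flat_map. exists d. split; [apply in_seq; nia|].
  apply in_map_iff. exists (Z.to_nat a', Z.to_nat b'). simpl. rewrite <- Ea, <- Eb. split; auto.
  apply in_divisor_pairs. repeat split; try lia.
  apply Nat.div_le_lower_bound; nia.
Qed.

Open Scope R_scope.

Lemma Cn_eq_coprime_count G q n : 0 < q -> (forall x, G x <-> multiples q x) ->
  Cn_eq G n (coprime_count n).
Proof.
  intros Hq EG.
  assert (Ec : forall D, c_le G D n <-> c_le (multiples q) D n).
  { intro D. split; apply c_le_ext; try tauto; intro x; now rewrite EG. }
  apply (card_sets_eq_of_list _ (fun ab => multiples (q * INR (fst ab) / INR (snd ab)))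
           (coprime_pairs n) (0, 0)%nat); [apply NoDup_coprime_pairs | | |].
  - intros [a b] Hab. apply in_coprime_pairs in Hab as [[Ha [Hb Hn]] Hcop].
    split; [apply subgroup_multiples|]. apply Ec. now apply c_le_multiples_iff.
  - intros [a b] [a' b'] Hab Hab' E. simpl in E.
    apply in_coprime_pairs in Hab as [[Ha [Hb _]] Hcop].
    apply in_coprime_pairs in Hab' as [[Ha' [Hb' _]] Hcop'].
    assert (0 < INR a) by (apply lt_0_INR; lia). assert (0 < INR b) by (apply lt_0_INR; lia).
    assert (0 < INR a') by (apply lt_0_INR; lia). assert (0 < INR b') by (apply lt_0_INR; lia).
    apply multiples_inj in E; try (apply Rdiv_lt_0_compat; nra).
    destruct (coprime_fraction_inj a b a' b') as [-> ->]; auto.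
    apply (Rmult_eq_reg_l q); [|lra]. unfold Rdiv in *. rewrite <- !Rmult_assoc. exact E.
  - intros D [HD Hc]. apply Ec in Hc.
    destruct (c_le_multiples_form q D n Hq HD Hc) as [a [b [Ha [Hb [Hcop ED]]]]].
    exists (a, b). split; [|intro x; symmetry; apply ED].
    apply in_coprime_pairs. repeat split; auto.
    apply (c_le_multiples_iff q a b n); auto. revert Hc. apply c_le_ext; tauto.
Qed.

Lemma commensurable_Z_multiples G : is_subgroup G -> commensurable G Zset ->
  exists q, 0 < q /\ forall x, G x <-> multiples q x.
Proof.
  intros HG [n Hc].
  assert (EZ : forall x, Zset x <-> multiples 1 x).
  { intro x. split; intros [z ->]; exists z; ring. }
  apply c_le_sym, (c_le_ext _ _ (multiples 1) G n EZ (fun x => iff_refl _)) in Hc.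
  destruct (c_le_multiples_form 1 G n Rlt_0_1 HG Hc) as [a [b [Ha [Hb [_ EG]]]]].
  exists (1 * INR a / INR b). split; [|exact EG].
  rewrite Rmult_1_l. apply Rdiv_lt_0_compat; apply lt_0_INR; lia.
Qed.

(** * Harmonic sums and growth of [C_n] *)

Lemma ln_le x y : 0 < x -> x <= y -> ln x <= ln y.
Proof.
  intros Hx [lt|<-]; [|apply Rle_refl].
  left. now apply ln_increasing.
Qed.

Lemma ln_le_sub_1 y : 0 < y -> ln y <= y - 1.
Proof.
  intro Hy. rewrite <- (ln_exp (y - 1)). apply ln_le; auto.
  pose proof (exp_ineq1_le (y - 1)). lra.
Qed.

Lemma ln_0 : ln 0 = 0.
Proof. unfold ln. destruct (Rlt_dec 0 0); [exfalso; lra | reflexivity]. Qed.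

Lemma ln_INR_nonneg n : 0 <= ln (INR n).
Proof.
  destruct n as [|n].
  - rewrite INR_0, ln_0. apply Rle_refl.
  - rewrite <- ln_1. apply ln_le; [lra|]. apply (le_INR 1). lia.
Qed.

Lemma ln_succ_sub_bounds x : 1 <= x -> / (x + 1) <= ln (x + 1) - ln x <= / x.
Proof.
  intro Hx.
  assert (Hpos : 0 < (x + 1) / x) by (apply Rdiv_lt_0_compat; lra).
  replace (ln (x + 1) - ln x) with (ln ((x + 1) / x)).
  2: { unfold Rdiv. rewrite ln_mult, ln_Rinv by (try apply Rinv_0_lt_compat; lra). ring. }
  split.
  - pose proof (ln_le_sub_1 (/ ((x + 1) / x)) (Rinv_0_lt_compat _ Hpos)) as H.
    rewrite ln_Rinv in H by exact Hpos.
    replace (/ ((x + 1) / x) - 1) with (- / (x + 1)) in H by (field; lra). lra.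
  - pose proof (ln_le_sub_1 _ Hpos) as H.
    replace ((x + 1) / x - 1) with (/ x) in H by (field; lra). exact H.
Qed.

Fixpoint harmonic (k : nat) : R :=
  match k with
  | O => 0
  | S k' => harmonic k' + / INR k
  end.

Lemma harmonic_le k : (1 <= k)%nat -> harmonic k <= 1 + ln (INR k).
Proof.
  induction k as [|k IH]; intro Hk; [lia|].
  destruct (Nat.eq_dec k 0) as [->|nz]; [simpl; rewrite ln_1; lra|].
  change (harmonic (S k)) with (harmonic k + / INR (S k)). rewrite S_INR.
  assert (1 <= INR k) by (apply (le_INR 1); lia).
  pose proof (ln_succ_sub_bounds (INR k) H). specialize (IH ltac:(lia)). lra.
Qed.

Lemma ln_succ_le_harmonic k : ln (INR (S k)) <= harmonic k.
Proof.
  induction k as [|k IH]; [simpl; rewrite ln_1; lra|].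
  change (harmonic (S k)) with (harmonic k + / INR (S k)). rewrite (S_INR (S k)).
  assert (1 <= INR (S k)) by (apply (le_INR 1); lia).
  pose proof (ln_succ_sub_bounds (INR (S k)) H). lra.
Qed.

Lemma sum_div_le n k : INR (list_sum (map (fun a => (n / a)%nat) (seq 1 k))) <= INR n * harmonic k.
Proof.
  induction k as [|k IH]; [simpl; lra|].
  rewrite seq_S, map_app, list_sum_app, plus_INR.
  change (harmonic (S k)) with (harmonic k + / INR (S k)).
  replace (list_sum (map (fun a => (n / a)%nat) ((1 + k)%nat :: nil))) with (n / S k)%nat
    by (simpl; lia).
  assert (0 < INR (S k)) by (apply lt_0_INR; lia).
  assert (INR (n / S k) * INR (S k) <= INR n).
  { rewrite <- mult_INR. apply le_INR. rewrite Nat.mul_comm. apply Nat.Div0.mul_div_le. }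
  assert (INR (n / S k) <= INR n * / INR (S k)).
  { apply (Rmult_le_reg_r (INR (S k))); auto. field_simplify; lra. }
  nra.
Qed.

Lemma sum_div_ge n k :
  INR n * harmonic k - INR k <= INR (list_sum (map (fun a => (n / a)%nat) (seq 1 k))).
Proof.
  induction k as [|k IH]; [simpl; lra|].
  rewrite seq_S, map_app, list_sum_app, plus_INR.
  change (harmonic (S k)) with (harmonic k + / INR (S k)).
  replace (list_sum (map (fun a => (n / a)%nat) ((1 + k)%nat :: nil))) with (n / S k)%nat
    by (simpl; lia).
  assert (0 < INR (S k)) by (apply lt_0_INR; lia).
  assert (INR n < (INR (n / S k) + 1) * INR (S k)).
  { pose proof (Nat.div_mod_eq n (S k)). pose proof (Nat.mod_upper_bound n (S k) ltac:(lia)).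
    rewrite <- (S_INR (n / S k)), <- mult_INR. apply lt_INR. nia. }
  assert (INR n * / INR (S k) - 1 <= INR (n / S k)).
  { apply (Rmult_le_reg_r (INR (S k))); auto. field_simplify; lra. }
  rewrite (S_INR k) in *. lra.
Qed.

Lemma length_divisor_pairs_le m n : (m <= n)%nat -> (1 <= n)%nat ->
  INR (length (divisor_pairs m)) <= INR m * (1 + ln (INR n)).
Proof.
  intros Hmn Hn. rewrite length_divisor_pairs.
  destruct m as [|m]; [simpl; lra|].
  eapply Rle_trans; [apply sum_div_le|].
  apply Rmult_le_compat_l; [apply pos_INR|].
  eapply Rle_trans; [apply harmonic_le; lia|].
  assert (ln (INR (S m)) <= ln (INR n)) by (apply ln_le; [apply lt_0_INR; lia | now apply le_INR]).
  lra.
Qed.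

Lemma length_divisor_pairs_ge n : INR n * ln (INR n) - INR n <= INR (length (divisor_pairs n)).
Proof.
  rewrite length_divisor_pairs. eapply Rle_trans; [|apply sum_div_ge].
  destruct n as [|n]; [simpl; lra|].
  assert (ln (INR (S n)) <= harmonic (S n)).
  { eapply Rle_trans; [|apply ln_succ_le_harmonic].
    apply ln_le; [apply lt_0_INR; lia | apply le_INR; lia]. }
  pose proof (pos_INR (S n)). nra.
Qed.

(* Telescoping against [1 / (d (d - 1))] after the first term [1/4]. *)
Lemma sum_le_inv_sq (f : nat -> nat) W k : 0 <= W -> (1 <= k)%nat ->
  (forall d, (2 <= d)%nat -> INR (f d) <= W / (INR d * INR d)) ->
  INR (list_sum (map f (seq 2 k))) <= W * (3 / 4 - / INR (S k)).
Proof.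
  intros HW Hk Hf. induction k as [|k IH]; [lia|].
  rewrite seq_S, map_app, list_sum_app, plus_INR.
  replace (list_sum (map f ((2 + k)%nat :: nil))) with (f (2 + k)%nat) by (simpl; lia).
  pose proof (Hf (2 + k)%nat ltac:(lia)) as Hlast.
  destruct (Nat.eq_dec k 0) as [->|nz].
  - simpl in *. replace (W * (3 / 4 - / (1 + 1))) with (W / ((1 + 1) * (1 + 1))) by field. lra.
  - specialize (IH ltac:(lia)).
    replace (INR (2 + k)) with (INR (S k) + 1) in Hlast by (rewrite !S_INR, plus_INR; simpl; ring).
    rewrite (S_INR (S k)).
    assert (1 <= INR (S k)) by (apply (le_INR 1); lia).
    set (x := INR (S k)) in *.
    assert (W / ((x + 1) * (x + 1)) <= W * (/ x - / (x + 1))).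
    { replace (W * (/ x - / (x + 1))) with (W / (x * (x + 1))) by (field; lra).
      unfold Rdiv. apply Rmult_le_compat_l; auto. apply Rinv_le_contravar; nra. }
    lra.
Qed.

Lemma sieve_sum_le n : (1 <= n)%nat ->
  INR (list_sum (map (fun d => length (divisor_pairs (n / (d * d)))) (seq 2 (n - 1)))) <=
  3 / 4 * (INR n * (1 + ln (INR n))).
Proof.
  intro Hn. set (W := INR n * (1 + ln (INR n))).
  assert (HW : 0 <= W) by (unfold W; pose proof (ln_INR_nonneg n); pose proof (pos_INR n); nra).
  destruct (Nat.eq_dec n 1) as [->|n1]; [simpl; lra|].
  eapply Rle_trans.
  - apply sum_le_inv_sq; [exact HW | lia |]. intros d Hd.
    assert (Hdd : (1 <= d * d)%nat) by nia.
    eapply Rle_trans.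
    { apply (length_divisor_pairs_le _ n); [apply Nat.Div0.div_le_upper_bound; nia | lia]. }
    assert (0 < INR d) by (apply lt_0_INR; lia).
    assert (INR (n / (d * d)) * (INR d * INR d) <= INR n).
    { rewrite <- !mult_INR. apply le_INR. rewrite Nat.mul_comm. apply Nat.Div0.mul_div_le. }
    pose proof (ln_INR_nonneg n).
    apply Rle_trans with (INR n / (INR d * INR d) * (1 + ln (INR n))); [|right; unfold W; field; lra].
    apply Rmult_le_compat_r; [lra|].
    apply (Rmult_le_reg_r (INR d * INR d)); [nra|]. field_simplify; nra.
  - assert (0 < / INR (S (n - 1))) by (apply Rinv_0_lt_compat, lt_0_INR; lia). nra.
Qed.

Lemma coprime_count_lower n : (1 <= n)%nat ->
  INR n * ln (INR n) / 4 - 7 / 4 * INR n <= INR (coprime_count n).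
Proof.
  intro Hn.
  pose proof (le_INR _ _ (divisor_pairs_le_coprime_count_add n)) as Hsieve. rewrite plus_INR in Hsieve.
  pose proof (sieve_sum_le n Hn). pose proof (length_divisor_pairs_ge n). lra.
Qed.

Lemma coprime_count_upper n : INR (coprime_count n) <= INR n * (1 + ln (INR n)).
Proof.
  eapply Rle_trans; [apply le_INR, coprime_count_le|].
  destruct n as [|n]; [simpl; lra|].
  apply length_divisor_pairs_le; lia.
Qed.

Lemma ln_3_ge_1 : 1 <= ln 3.
Proof. rewrite <- (ln_exp 1). apply ln_le; [apply exp_pos | apply exp_le_3]. Qed.

Lemma rpow_ln_2_le L : 0 <= L -> rpow L (ln 2) <= 1 + L.
Proof.
  intro HL. unfold rpow. destruct (Rlt_dec 0 L) as [Lpos|]; [|lra].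
  assert (Hln2 : 0 <= ln 2 <= 1) by (pose proof ln_lt_2; pose proof (ln_le_sub_1 2); lra).
  destruct (Rle_dec L 1) as [Lle1|Lgt1].
  - apply Rle_trans with (Rpower 1 (ln 2)); [apply Rle_Rpower_l; lra|].
    unfold Rpower. rewrite ln_1, Rmult_0_r, exp_0. lra.
  - apply Rle_trans with (Rpower L 1); [apply Rle_Rpower; lra|].
    rewrite Rpower_1; lra.
Qed.

Lemma ln_coprime_count_le n : ln (INR (coprime_count n)) <= 2 * ln (INR n).
Proof.
  pose proof (ln_INR_nonneg n) as Hln.
  pose proof (coprime_count_upper n) as Hup.
  destruct (Nat.eq_dec (coprime_count n) 0) as [E|NE]; [rewrite E, INR_0, ln_0; lra|].
  assert (Hpos : 0 < INR (coprime_count n)) by (apply lt_0_INR; lia).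
  assert (Hn : 0 < INR n) by (destruct n; [rewrite INR_0, Rmult_0_l in Hup; lra | apply lt_0_INR; lia]).
  pose proof (ln_le_sub_1 (INR n) Hn).
  replace (2 * ln (INR n)) with (ln (INR n * INR n)) by (rewrite ln_mult; lra).
  apply ln_le; nra.
Qed.

Lemma ln_coprime_count_simeq : simeq (fun n => ln (INR (coprime_count n))) (fun n => ln (INR n)).
Proof.
  split.
  - exists 2%nat. split; [lia|]. intro n.
    pose proof (ln_coprime_count_le n).
    destruct n as [|n]; [simpl; rewrite ln_0 in *; lra|].
    assert (ln (INR (S n)) <= ln (INR (2 * S n))) by (apply ln_le; [apply lt_0_INR | apply le_INR]; lia).
    simpl (INR 2). lra.
  - exists 1%nat. split; [lia|]. intro n. rewrite Nat.mul_1_l, Rmult_1_l.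
    destruct n as [|n]; [rewrite INR_0, ln_0; apply ln_INR_nonneg|].
    apply ln_le; [apply lt_0_INR; lia | apply le_INR, coprime_count_ge].
Qed.

Lemma coprime_count_preceq_upper :
  preceq (fun n => INR (coprime_count n)) (fun n => INR n * ln (INR n)).
Proof.
  exists 3%nat. split; [lia|]. intro n.
  pose proof (coprime_count_upper n).
  destruct n as [|n]; [simpl in *; lra|].
  pose proof ln_3_ge_1. pose proof (ln_INR_nonneg (S n)).
  assert (0 < INR (S n)) by (apply lt_0_INR; lia).
  rewrite mult_INR, ln_mult by (apply lt_0_INR; lia).
  replace (INR 3) with 3 by (simpl; lra). nra.
Qed.

(* From [C(N) >= N ln N / 4 - 7 N / 4] at [N = K n]: the [ln K] term absorbs the constant. *)
Lemma coprime_count_scaled_ge K n : (2 <= K)%nat -> 8 <= ln (INR K) ->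
  INR n * (1 + ln (INR n)) <= INR K * INR (coprime_count (K * n)).
Proof.
  intros HK lnK.
  pose proof (pos_INR (coprime_count (K * n))).
  assert (Kge2 : 2 <= INR K) by (apply (le_INR 2); lia).
  destruct n as [|n]; [simpl; nra|].
  pose proof (ln_INR_nonneg (S n)).
  assert (0 < INR (S n)) by (apply lt_0_INR; lia).
  pose proof (coprime_count_lower (K * S n) ltac:(nia)) as Hlow.
  rewrite mult_INR, ln_mult in Hlow by lra.
  set (x := INR (S n)) in *. set (k := INR K) in *. set (L := ln x) in *.
  assert (Hcount : k * x * (1 + L) / 4 <= INR (coprime_count (K * S n))).
  { eapply Rle_trans; [|exact Hlow].
    assert (0 <= k * x) by nra. nra. }
  assert (0 <= x * (1 + L)) by nra.
  nra.
Qed.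

Lemma coprime_count_preceq_lower :
  preceq (fun n => INR n * rpow (ln (INR n)) (ln 2)) (fun n => INR (coprime_count n)).
Proof.
  exists (3 ^ 8)%nat. split; [apply Nat.neq_0_lt_0, Nat.pow_nonzero; lia|]. intro n.
  eapply Rle_trans; [|apply coprime_count_scaled_ge].
  - apply Rmult_le_compat_l; [apply pos_INR | apply rpow_ln_2_le, ln_INR_nonneg].
  - simpl. lia.
  - rewrite pow_INR, ln_pow by (simpl; lra).
    pose proof ln_3_ge_1. replace (INR 3) with 3 by (simpl; lra). simpl. lra.
Qed.

Theorem proposition3 (G : R -> Prop) :
  is_subgroup G -> commensurable G Zset ->
  exists C : nat -> nat,
    (forall n, Cn_eq G n (C n)) /\
    simeq (fun n => ln (INR (C n))) (fun n => ln (INR n)) /\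
    preceq (fun n => INR n * rpow (ln (INR n)) (ln 2)) (fun n => INR (C n)) /\
    preceq (fun n => INR (C n)) (fun n => INR n * ln (INR n)).
Proof.
  intros HG HGZ.
  destruct (commensurable_Z_multiples G HG HGZ) as [q [Hq EG]].
  exists coprime_count. split; [|split; [|split]].
  - intro n. exact (Cn_eq_coprime_count G q n Hq EG).
  - exact ln_coprime_count_simeq.
  - exact coprime_count_preceq_lower.
  - exact coprime_count_preceq_upper.
Qed.
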